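(* There is a topological space of size $\mathfrak{c}$ which is $NWD$-separable but not $d$-separable.
   Context: A space $X$ is $NWD$-separable if for every sequence $\{D_n:n<\omega\}$ of dense subsets of $X$ there are nowhere dense sets $E_n\subseteq D_n$ such that $\bigcup_{n<\omega}E_n$ is dense. A space is $d$-separable if it has a dense subset which is a countable union of discrete subspaces. $\mathfrak{c}=2^{\aleph_0}$. *)

From HB Require Import structures.
From mathcomp Require Import all_boot all_order.
From mathcomp Require Import boolp classical_sets cardinality topology.
Set Implicit Arguments. Unset Strict Implicit. Unset Printing Implicit Defensive.
Local Open Scope classical_set_scope.

Definition nowhere_dense (T : topologicalType) (E : set T) : Prop :=
  (closure E)^° = set0.

Definition discrete_subspace (T : topologicalType) (D : set T) : Prop :=
  forall x, D x -> exists U : set T, open U /\ U `&` D = [set x].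

Definition NWD_separable (T : topologicalType) : Prop :=
  forall D : nat -> set T, (forall n, dense (D n)) ->
    exists E : nat -> set T,
      (forall n, E n `<=` D n /\ nowhere_dense (E n)) /\
      dense (\bigcup_n E n).

Definition d_separable (T : topologicalType) : Prop :=
  exists S : nat -> set T,
    (forall n, discrete_subspace (S n)) /\ dense (\bigcup_n S n).

From HB Require Import structures.
From mathcomp Require Import all_boot all_order.
From mathcomp Require Import boolp classical_sets cardinality topology.
From mathcomp Require Import zify.
Set Implicit Arguments. Unset Strict Implicit. Unset Printing Implicit Defensive.
Local Open Scope classical_set_scope.
Local Open Scope card_scope.

(* Split a set of size c into countably many fibers q^-1(k), each of size c,
   and call a set open if around each of its points x it contains all points
   outside a countable set and outside finitely many fibers other than that of
   x.  Every nonempty open set then meets each uncountable subset of all but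
   finitely many fibers, while each fiber is nowhere dense.  Given dense sets
   D_n, some fiber beyond n meets D_n uncountably; these traces are nowhere
   dense and together dense.  On the other hand a discrete subspace meets every
   fiber in a countable set, so is countable, and countable sets are never
   dense: the space is not d-separable. *)

Lemma countableU T (A B : set T) :
  countable A -> countable B -> countable (A `|` B).
Proof.
by move=> cA cB; rewrite -bigcup2E; apply: bigcup_countable => // -[|[|]].
Qed.

Lemma bool_seq_uncountable : ~ countable [set: nat -> bool].
Proof.
move=> /countable_injP[f /in2TT f_inj].
pose d n := ~~ `[< exists z : nat -> bool, f z = n /\ z n >].
have : d (f d) = ~~ d (f d).
  congr negb; apply/asboolP/idP => [[z [/f_inj -> //]]|dfd]; by exists d.
by case: (d (f d)).
Qed.

Lemma notin_seq_large (F : seq nat) : exists N, forall k, N <= k -> k \notin F.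
Proof.
elim: F => [|a F [N HN]]; first by exists 0.
exists (maxn N a.+1) => k; rewrite geq_max => /andP[Nk ak].
by rewrite in_cons negb_or HN // andbT; apply/eqP => ka; rewrite ka ltnn in ak.
Qed.

Definition fibered {T : choiceType} (q : T -> nat) : Type := T.

Section FiberedTopology.
Variables (T : choiceType) (q : T -> nat).

Definition avoid (Z : set T) (F : seq nat) : set T :=
  [set y | q y \notin F /\ ~ Z y].

(* x need not belong to [avoid Z F]: only its fiber must not be listed in F. *)
Definition fiber_open (O : set T) : Prop :=
  forall x, O x -> exists Z F, countable Z /\ q x \notin F /\ avoid Z F `<=` O.

Lemma fiber_openT : fiber_open setT.
Proof. by move=> x _; exists set0, [::]. Qed.

Lemma fiber_openI : setI_closed fiber_open.
Proof.
move=> A B oA oB x [Ax Bx].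
have [Z1 [F1 [cZ1 [xF1 sA]]]] := oA x Ax.
have [Z2 [F2 [cZ2 [xF2 sB]]]] := oB x Bx.
exists (Z1 `|` Z2), (F1 ++ F2); rewrite mem_cat negb_or xF1 xF2.
split; [exact: countableU | split=> // y []].
rewrite mem_cat negb_or => /andP[yF1 yF2] yZ.
by split; [apply: sA | apply: sB]; split=> // Zy; apply: yZ; [left | right].
Qed.

Lemma fiber_open_bigU (I : Type) (O : I -> set T) :
  (forall i, fiber_open (O i)) -> fiber_open (\bigcup_i O i).
Proof.
move=> oO x [i _ Oix]; have [Z [F [cZ [xF sO]]]] := oO i x Oix.
by exists Z, F; do 2!split=> //; move=> y /sO; exists i.
Qed.

End FiberedTopology.

HB.instance Definition _ (T : choiceType) (q : T -> nat) :=
  Choice.on (fibered q).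
HB.instance Definition _ (T : choiceType) (q : T -> nat) :=
  isOpenTopological.Build (fibered q)
    (@fiber_openT T q) (@fiber_openI T q) (@fiber_open_bigU T q).

Section FiberedSpace.
Variables (T : choiceType) (q : T -> nat).
Hypothesis fiber_uncountable : forall k, ~ countable (q @^-1` [set k]).

Local Notation X := (fibered q).

Lemma fiber_notin_countable (Z : set T) k :
  countable Z -> exists y, q y = k /\ ~ Z y.
Proof.
move=> cZ; apply: contrapT => noy; case: (@fiber_uncountable k).
apply: sub_countable cZ; apply: subset_card_le => y qy.
by apply: contrapT => Zy; apply: noy; exists y.
Qed.

Lemma fiber_openP (O : set X) : fiber_open q O <-> open O.
Proof. by split=> h; exact h. Qed.

Lemma avoid_open Z F : countable Z -> @open X (avoid q Z F).
Proof.
move=> cZ; apply: (fiber_openP _).1 => x [xF xZ].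
by exists Z, F; split=> //; split.
Qed.

Lemma avoid_nonempty Z F : countable Z -> exists y, avoid q Z F y.
Proof.
move=> cZ; have [N NF] := notin_seq_large F.
have [y [qy yZ]] := fiber_notin_countable N cZ.
by exists y; split=> //; apply: NF; rewrite qy.
Qed.

Lemma dense_meets_avoid (D : set X) Z F :
  dense D -> countable Z -> exists y, D y /\ avoid q Z F y.
Proof.
move=> dD cZ; have [y Wy] := avoid_nonempty F cZ.
have [z [Wz Dz]] := dD _ (ex_intro _ y Wy) (avoid_open (F:=F) cZ).
by exists z.
Qed.

Lemma countable_not_dense (C : set X) : countable C -> ~ dense C.
Proof.
by move=> cC dC; have [y [Cy [_ /(_ Cy)]]] := dense_meets_avoid [::] dC cC.
Qed.

Lemma nowhere_dense_fiber (E : set X) k :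
  E `<=` q @^-1` [set k] -> nowhere_dense E.
Proof.
move=> Ek; apply/seteqP; split=> // x.
rewrite /interior nbhsE => -[O [oO Ox] Ocl].
have [Z [F [cZ [_ sO]]]] := (fiber_openP O).2 oO x Ox.
have [N NkF] := notin_seq_large (k :: F).
have [y [qy yZ]] := fiber_notin_countable N cZ.
have /andP[yk yF] : (q y != k) && (q y \notin F).
  by rewrite -negb_or -in_cons qy NkF.
have [z [Ez [zk _]]] : E `&` avoid q set0 [:: k] !=set0.
  apply: (Ocl y (sO y (conj yF yZ))); apply: open_nbhs_nbhs; split.
    exact: avoid_open.
  by split=> //; rewrite in_cons negb_or yk.
by move: zk; rewrite in_cons (Ek z Ez) eqxx.
Qed.

Lemma discrete_fiber_countable (A : set X) k :
  discrete_subspace A -> countable (A `&` q @^-1` [set k]).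
Proof.
move=> dA; have [[x [Ax qx]]|no_x] := pselect (exists x, A x /\ q x = k).
  2: by rewrite (_ : _ `&` _ = set0) // -subset0 => y [? ?]; apply: no_x; exists y.
have [U [oU UA]] := dA x Ax.
have [Ux _] : (U `&` A) x by rewrite UA.
have [Z [F [cZ [xF sU]]]] := (fiber_openP U).2 oU x Ux.
apply: sub_countable (countableU cZ (countable1 x)); apply: subset_card_le.
move=> y [Ay qy]; have [Zy|yZ] := pselect (Z y); [by left | right].
have Uy : U y by apply: sU; split; rewrite // qy -qx.
by rewrite -UA.
Qed.

Lemma discrete_subspace_countable (A : set X) :
  discrete_subspace A -> countable A.
Proof.
move=> dA; have -> : A = \bigcup_k (A `&` q @^-1` [set k]).
  by apply/seteqP; split=> [y Ay | y [k _ []]] //; exists (q y).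
by apply: bigcup_countable => // k _; apply: discrete_fiber_countable.
Qed.

Lemma fibered_not_d_separable : ~ d_separable X.
Proof.
move=> [S [dS]]; apply: countable_not_dense.
by apply: bigcup_countable => // n _; apply: discrete_subspace_countable.
Qed.

Lemma dense_fiber_uncountable (D : set X) n : dense D ->
  exists2 k, n <= k & ~ countable (D `&` q @^-1` [set k]).
Proof.
move=> dD; apply: contrapT => no_k.
pose Z := \bigcup_(k in [set k | n <= k]) (D `&` q @^-1` [set k]).
have cZ : countable Z.
  apply: bigcup_countable => // k nk; apply: contrapT => ?; apply: no_k.
  by exists k.
have [y [Dy [yn yZ]]] := dense_meets_avoid (iota 0 n) dD cZ.
by apply: yZ; exists (q y) => //=; move: yn; rewrite mem_iota /= -leqNgt.
Qed.

Lemma open_meets_large_uncountable (O : set X) : open O -> O !=set0 ->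
  exists N, forall A : set X, (forall y, A y -> N <= q y) -> ~ countable A ->
    O `&` A !=set0.
Proof.
move=> oO [x Ox]; have [Z [F [cZ [_ sO]]]] := (fiber_openP O).2 oO x Ox.
have [N NF] := notin_seq_large F.
exists N => A AN Au; have [y [Ay yZ]] : exists y, A y /\ ~ Z y.
  apply: contrapT => no_y; apply/Au/(sub_countable _ cZ)/subset_card_le => y Ay.
  by apply: contrapT => yZ; apply: no_y; exists y.
by exists y; split=> //; apply: sO; split=> //; apply/NF/AN.
Qed.

Lemma fibered_NWD_separable : NWD_separable X.
Proof.
move=> D dD; have /choice[k kP] : forall n, exists k,
    n <= k /\ ~ countable (D n `&` q @^-1` [set k]).
  by move=> n; have [k] := dense_fiber_uncountable n (dD n); exists k.
exists (fun n => D n `&` q @^-1` [set k n]); split.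
  move=> n; split=> [y [] //|].
  by apply: (nowhere_dense_fiber (k := k n)) => y [].
move=> O O0 oO; have [N ON] := open_meets_large_uncountable oO O0.
have [N_k Dk] := kP N.
have [y [Oy DNy]] : O `&` (D N `&` q @^-1` [set k N]) !=set0.
  by apply: ON Dk => y [_ ->].
by exists y; split=> //; exists N.
Qed.

End FiberedSpace.

(* The all-false sequence is sent to 0 as well. *)
Definition first_one (f : nat -> bool) : nat :=
  if pselect (exists i, f i) is left ex_i then ex_minn ex_i else 0.

Definition prepend_one (k : nat) (g : nat -> bool) : nat -> bool :=
  fun i => if i < k then false else if i == k then true else g (i - k.+1).

Lemma first_one_prepend k g : first_one (prepend_one k g) = k.
Proof.
rewrite /first_one; case: pselect => [ex_i|]; last first.
  by case; exists k; rewrite /prepend_one ltnn eqxx.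
case: ex_minnP => m m_one min_m; apply/eqP; rewrite eqn_leq.
rewrite min_m ?andbT; last by rewrite /prepend_one ltnn eqxx.
by move: m_one; rewrite /prepend_one; case: ltnP.
Qed.

Lemma prepend_one_inj k : injective (prepend_one k).
Proof.
move=> g h gh; apply/funext => i.
have := congr1 (fun f => f (i + k.+1)) gh; rewrite /prepend_one /=.
have -> : (i + k.+1 < k) = false by lia.
have -> : (i + k.+1 == k) = false by lia.
by rewrite addnK.
Qed.

Lemma first_one_fiber_uncountable k : ~ countable (first_one @^-1` [set k]).
Proof.
move=> cfib; apply: bool_seq_uncountable; apply: card_le_trans cfib.
rewrite -(card_le_eql (inj_card_eq (in2W (@prepend_one_inj k)))).
by apply: subset_card_le => _ [g _ <-]; apply: first_one_prepend.
Qed.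

Theorem mainTheorem10 :
  exists T : topologicalType,
    ([set: T] #= [set: nat -> bool]) /\ NWD_separable T /\ ~ d_separable T.
Proof.
exists (fibered first_one); split; first exact: card_eqxx.
split; first exact: fibered_NWD_separable first_one_fiber_uncountable.
exact: fibered_not_d_separable first_one_fiber_uncountable.
Qed.
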